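(* Let a game belong to the class $\mathcal P$ with parameters $w$ and $\gamma>0$, $w>-(I-1)\gamma$, and set $p=\gamma/(w+\gamma I)$. If $0<\varepsilon<\bar\varepsilon$ then for every information tree $\mathcal T$, $$\max_{\sigma\in\mathcal E(\mathcal T)}\mathbb P_{\mathcal T}[a_i=1\ \forall i\mid\sigma]=\begin{cases}1&\text{if }p\le q_1,\\ \rho(1-\varepsilon)^I&\text{if }q_1<p\le q_2,\\ 0&\text{if }p>q_2,\end{cases}$$ where $q_1=\rho\varepsilon/(1-\rho(1-\varepsilon))$ and $q_2=(1-\varepsilon)^{I-1}$.
   Context: Model. Fix an integer $I\ge2$, agents $\mathcal I=\{1,\dots,I\}$, a prior $\rho\in(0,1)$ and a loss probability $\varepsilon\in(0,1)$. A state of nature $\theta\in\{g,b\}$ has $\Pr(\theta=g)=\rho$. A forest on $\mathcal I$ is a collection of vertex-disjoint undirected trees whose vertex sets partition $\mathcal I$; a seeding chooses exactly one vertex (seed) of each tree. The pair $\mathcal T$ (forest, seeding) is an information tree: orient each tree away from its seed and add a root $0$ (the planner) with an arc from $0$ to each seed. If $\theta=b$ no messages are sent. If $\theta=g$ the planner sends a message along each arc from $0$, and every agent who receives a message forwards it along every arc leaving her. Each transmission is lost independently with probability $\varepsilon$. Agent $i$ observes only $x_i\in\{y,n\}$ (received / not); $\mathbb P_{\mathcal T}$ is the induced probability. $\bar\varepsilon$ is the unique $\varepsilon\in(0,1)$ with $q_1=q_2$. Class $\mathcal P$: symmetric $I$-player games in which each $i$ chooses $a_i\in\{0,1\}$,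 payoffs $u^\theta_i(a_i,\mathbf a_{-i})$ depend on $\theta$, $a_i$ and $\sum_{j\ne i}a_j$, and for each $\theta$ there is a potential $v^\theta$ with $u^\theta_i(a_i,\mathbf a_{-i})-u^\theta_i(a_i',\mathbf a_{-i})=v^\theta(a_i,\mathbf a_{-i})-v^\theta(a_i',\mathbf a_{-i})$ for all $i,a_i,a_i',\mathbf a_{-i}$, where $v^g(\mathbf a)=w$ if $\sum_ja_j=I$, $v^g(\mathbf a)=-\gamma\sum_ja_j$ if $\sum_ja_j<I$, and $v^b(\mathbf a)=-\gamma\sum_ja_j$. Each agent chooses $a_i$ knowing only $x_i$; $\mathcal E(\mathcal T)$ is the set of (mixed) Bayesian Nash equilibria. *)

From HB Require Import structures.
From mathcomp Require Import all_boot all_order all_algebra.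
From mathcomp Require Import reals.
Set Implicit Arguments. Unset Strict Implicit. Unset Printing Implicit Defensive.
Import Order.TTheory GRing.Theory Num.Theory.
Local Open Scope ring_scope.

(* Conventions:
   - agents are 'I_I (agent i+1 of the paper is the ordinal i);
   - the state theta : bool, with true = g (good) and false = b (bad);
   - an action profile is a : {ffun 'I_I -> bool} (true = action 1);
   - an information tree (forest + seeding, oriented away from the seeds,
     with planner root 0) is encoded by its parent map
     par : 'I_I -> option 'I_I  (None = parent is the planner 0, i.e. the
     agent is a seed); it must be acyclic;
   - a loss pattern l : {ffun 'I_I -> bool}: l j = true iff the transmission
     along the unique arc entering j is lost (each agent has exactly one
     incoming arc). *)

Section Model.
Variable R : realType.
Variable I : nat.

Definition profile := {ffun 'I_I -> bool}.
Definition losses := {ffun 'I_I -> bool}.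

(* parent map describes a rooted forest (every agent reaches the planner) *)
Definition info_tree (par : 'I_I -> option 'I_I) : Prop :=
  forall i : 'I_I, iter I (fun o => obind par o) (Some i) = None.

(* j is i or an ancestor of i *)
Definition anc (par : 'I_I -> option 'I_I) (i j : 'I_I) : bool :=
  [exists k : 'I_I, iter k (fun o => obind par o) (Some i) == Some j].

(* x_i = y  iff  theta = g and no arc on the path from 0 to i lost the message *)
Definition received (par : 'I_I -> option 'I_I) (th : bool) (l : losses)
  (i : 'I_I) : bool :=
  th && [forall j, anc par i j ==> ~~ l j].

Definition lossprob (eps : R) (l : losses) : R :=
  \prod_(j : 'I_I) (if l j then eps else 1 - eps).

Definition prior (rho : R) (th : bool) : R := if th then rho else 1 - rho.

(* mixed strategy: sigma i x = probability that agent i plays 1 after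
   observing x (x = true means "y", received) *)
Definition strategy := 'I_I -> bool -> R.

Definition pact (s : R) (b : bool) : R := if b then s else 1 - s.

Definition weight (rho eps : R) (par : 'I_I -> option 'I_I)
  (sigma : strategy) (th : bool) (l : losses) (a : profile) : R :=
  prior rho th * lossprob eps l *
  \prod_(j : 'I_I) pact (sigma j (received par th l j)) (a j).

Definition others (a : profile) (i : 'I_I) : nat :=
  (\sum_(j : 'I_I | j != i) (a j : nat))%N.

(* expected utility of agent i; u th ai k = payoff given state th, own action
   ai and number k of other agents playing 1 (symmetric game) *)
Definition EU (rho eps : R) (par : 'I_I -> option 'I_I)
  (u : bool -> bool -> nat -> R) (sigma : strategy) (i : 'I_I) : R :=
  \sum_(th : bool) \sum_(l : losses) \sum_(a : profile)
     weight rho eps par sigma th l a * u th (a i) (others a i).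

Definition deviate (sigma : strategy) (i : 'I_I) (tau : bool -> R) : strategy :=
  fun j => if j == i then tau else sigma j.

Definition is_mixed (tau : bool -> R) : Prop := forall x, 0 <= tau x <= 1.

Definition is_BNE (rho eps : R) (par : 'I_I -> option 'I_I)
  (u : bool -> bool -> nat -> R) (sigma : strategy) : Prop :=
  (forall j, is_mixed (sigma j)) /\
  forall (i : 'I_I) (tau : bool -> R), is_mixed tau ->
    EU rho eps par u (deviate sigma i tau) i <= EU rho eps par u sigma i.

Definition prob_all1 (rho eps : R) (par : 'I_I -> option 'I_I)
  (sigma : strategy) : R :=
  \sum_(th : bool) \sum_(l : losses) \sum_(a : profile)
     weight rho eps par sigma th l a * (if [forall j, a j] then 1 else 0).

Definition vpot (w gamma : R) (th : bool) (a : profile) : R :=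
  let s := (\sum_(j : 'I_I) (a j : nat))%N in
  if th && (s == I) then w else - (gamma * s%:R).

Definition setp (a : profile) (i : 'I_I) (b : bool) : profile :=
  [ffun j => if j == i then b else a j].

Definition inClassP (w gamma : R) (u : bool -> bool -> nat -> R) : Prop :=
  forall (th : bool) (a : profile) (i : 'I_I) (b b' : bool),
    u th b (others a i) - u th b' (others a i) =
    vpot w gamma th (setp a i b) - vpot w gamma th (setp a i b').

Definition q1 (rho eps : R) : R := rho * eps / (1 - rho * (1 - eps)).
Definition q2 (eps : R) : R := (1 - eps) ^+ I.-1.

End Model.

From HB Require Import structures.
From mathcomp Require Import all_boot all_order all_algebra.
From mathcomp Require Import reals ring lra zify.
Set Implicit Arguments. Unset Strict Implicit. Unset Printing Implicit Defensive.
Import Order.TTheory GRing.Theory Num.Theory.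
Local Open Scope ring_scope.

(* Agent i's expected utility is affine in her own mixed strategy:
   the coefficient of sigma_i(x) is her incentive
     - gamma P[x_i = x] + (w + gamma I) P[theta = g, x_i = x, all others play 1].
   Three pure profiles are equilibria: everybody always plays 1 when p <= q1,
   everybody follows the message when q1 < p <= q2, and nobody plays 1 (here
   I >= 2 is used).  Conversely, if p > q1, an agent all of whose ancestors play 0
   after n has, after n, a coordination probability at most eps against a
   probability at least 1 - rho (1 - eps) of observing n, so she plays 0 after n;
   by induction on the depth nobody plays 1 without a message, which bounds the
   probability by rho (1 - eps)^I.  If moreover p > q2, a seed coordinates after y
   with probability at most (1 - eps)^(I-1), so she plays 0 and the probability
   that all agents play 1 vanishes. *)


Section Indicator.
Variable R : numDomainType.

Definition ind (b : bool) : R := if b then 1 else 0.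

Lemma ind_ge0 b : 0 <= ind b. Proof. by case: b. Qed.

Lemma ind_le1 b : ind b <= 1. Proof. by case: b; rewrite /= ?ler01. Qed.

Lemma ind_andb a b : ind (a && b) = ind a * ind b.
Proof. by case: a; case: b; rewrite /= ?mulr1 ?mulr0. Qed.

Lemma prod_ind (T : finType) (P : pred T) : \prod_j ind (P j) = ind [forall j, P j].
Proof.
case: forallP => [allP|]; first by rewrite big1 // => j _; rewrite allP.
move/forallP; rewrite negb_forall => /existsP[j /negbTE Pj].
by rewrite (bigD1 j) //= Pj mul0r.
Qed.

End Indicator.

Lemma sum_ffun_prod (R : comPzRingType) (T : finType) (G : T -> bool -> R) :
  \sum_(f : {ffun T -> bool}) \prod_j G j (f j) = \prod_j (G j true + G j false).
Proof. by rewrite -bigA_distr_bigA; apply: eq_bigr => j _; rewrite big_bool. Qed.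

Lemma prod_eq0 (R : comPzRingType) (T : finType) (P : pred T) (F : T -> R) j :
  P j -> F j = 0 -> \prod_(k | P k) F k = 0.
Proof. by move=> Pj Fj; rewrite (bigD1 j) //= Fj mul0r. Qed.

Lemma prod_in01 (R : numDomainType) (T : finType) (P : pred T) (F : T -> R) :
  (forall j, 0 <= F j <= 1) -> 0 <= \prod_(k | P k) F k <= 1.
Proof.
move=> F01; apply/andP; split; first by apply: prodr_ge0 => j _; case/andP: (F01 j).
by apply: prodr_ile1 => j _; apply: F01.
Qed.

Section Profiles.
Variables (R : realType) (I : nat).
Implicit Types (a : profile I) (s : 'I_I -> R).

Lemma setp_id a i : setp a i (a i) = a.
Proof. by apply/ffunP => j; rewrite ffunE; case: eqP => // ->. Qed.

Lemma others_setp a i b : others (setp a i b) i = others a i.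
Proof. by apply: eq_bigr => j /negbTE ji; rewrite ffunE ji. Qed.

Lemma sum_setp a i b : (\sum_j (setp a i b j : nat) = others a i + b)%N.
Proof.
rewrite (bigD1 i) //= ffunE eqxx addnC; congr (_ + _)%N.
by apply: eq_bigr => j /negbTE ji; rewrite ffunE ji.
Qed.

Lemma sum_profile_eqI a : (\sum_j (a j : nat) == I)%N = [forall j, a j].
Proof.
have split_I : (\sum_j (a j : nat) + \sum_j (~~ a j : nat) = I)%N.
  rewrite -big_split /= -[X in _ = X]card_ord -sum1_card.
  by apply: eq_bigr => j _; case: (a j).
have -> : [forall j, a j] = (\sum_j (~~ a j : nat) == 0)%N.
  by rewrite sum_nat_eq0; apply/forallP/forallP => h j; move: (h j); case: (a j).
apply/eqP/eqP; lia.
Qed.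

Lemma sum_profile_split (G : profile I -> R) i :
  \sum_(a : profile I) G a = \sum_(a : profile I | a i) (G a + G (setp a i false)).
Proof.
rewrite (bigID (fun a : profile I => a i)) /= big_split /=; congr (_ + _).
pose flip (a : profile I) := setp a i (~~ a i).
have flipK : involutive flip.
  by move=> a; apply/ffunP => j; rewrite !ffunE eqxx; case: eqP => [->|]; rewrite ?negbK.
rewrite (reindex_inj (inv_inj flipK)) /=.
apply: eq_big => [a|a ai]; first by rewrite ffunE eqxx negbK.
by move: ai; rewrite /flip ffunE eqxx negbK => ->.
Qed.

Definition pact_others s i a : R := \prod_(j | j != i) pact (s j) (a j).

Lemma eq_pact_others s s' i a : (forall j, j != i -> s j = s' j) ->
  pact_others s i a = pact_others s' i a.
Proof. by move=> eq_s; apply: eq_bigr => j /eq_s ->. Qed.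

Lemma prod_pact_true s i a : a i ->
  \prod_j pact (s j) (a j) = s i * pact_others s i a.
Proof. by move=> ai; rewrite (bigD1 i) //= ai. Qed.

Lemma prod_pact_false s i a :
  \prod_j pact (s j) (setp a i false j) = (1 - s i) * pact_others s i a.
Proof.
rewrite (bigD1 i) //= ffunE eqxx; congr (_ * _).
by apply: eq_bigr => j /negbTE ji; rewrite ffunE ji.
Qed.

Lemma sum_pact_others s i : \sum_(a : profile I | a i) pact_others s i a = 1.
Proof.
have total : \sum_(a : profile I) \prod_j pact (s j) (a j) = 1.
  by rewrite (sum_ffun_prod (fun j => pact (s j))) big1 // => j _; rewrite /= subrKC.
rewrite (sum_profile_split _ i) in total; rewrite -{}total; apply: eq_bigr => a ai.
by rewrite (prod_pact_true s ai) prod_pact_false; ring.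
Qed.

Lemma sum_mul_ind_all (P : pred (profile I)) (F : profile I -> R) : P [ffun => true] ->
  \sum_(a : profile I | P a) F a * ind R [forall j, a j] = F [ffun => true].
Proof.
move=> P1; rewrite (bigD1 [ffun => true]) //= big1 => [|a /andP[_ a_ones]].
  by rewrite addr0 (_ : [forall j, _] = true) ?mulr1 //; apply/forallP => j; rewrite ffunE.
case: forallP => [allA|]; last by rewrite mulr0.
by case/eqP: a_ones; apply/ffunP => j; rewrite ffunE allA.
Qed.

Lemma sum_pact_others_all s i :
  \sum_(a : profile I | a i) pact_others s i a * ind R [forall j, a j] = \prod_(j | j != i) s j.
Proof. by rewrite sum_mul_ind_all ?ffunE //; apply: eq_bigr => j _; rewrite ffunE. Qed.

Lemma sum_pact_own s i (F : bool -> nat -> R) :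
  \sum_(a : profile I) (\prod_j pact (s j) (a j)) * F (a i) (others a i) =
  \sum_(a : profile I | a i) pact_others s i a * (s i * F true (others a i) + (1 - s i) * F false (others a i)).
Proof.
rewrite (sum_profile_split _ i); apply: eq_bigr => a ai.
by rewrite (prod_pact_true s ai) prod_pact_false others_setp ai ffunE eqxx; ring.
Qed.

Variables (w gamma : R) (u : bool -> bool -> nat -> R).
Hypothesis u_classP : inClassP I w gamma u.

Lemma classP_gain th a i : a i ->
  u th true (others a i) - u th false (others a i) =
  - gamma + ind R (th && [forall j, a j]) * (w + gamma * I%:R).
Proof.
move=> ai; rewrite u_classP /vpot !sum_setp.
have setpT : setp a i true = a by rewrite -ai setp_id.
have full : (others a i + true == I)%N = [forall j, a j].
  by rewrite -(sum_setp a i true) setpT sum_profile_eqI.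
have -> : (others a i + false == I)%N = false.
  apply/negbTE; rewrite -(sum_setp a i false) sum_profile_eqI.
  by apply/negP => /forallP/(_ i); rewrite ffunE eqxx.
rewrite full andbF; case: th; rewrite /ind /= ?natrD; last by ring.
case: forallP => [allA|_]; last by ring.
have /eqP eI : (others a i + true == I)%N by rewrite full; apply/forallP.
have -> : I%:R = (others a i)%:R + 1 :> R by rewrite natr1 -addn1 eI.
by ring.
Qed.

Lemma sum_pact_payoff s th i :
  \sum_(a : profile I) (\prod_j pact (s j) (a j)) * u th (a i) (others a i) =
  \sum_(a : profile I | a i) pact_others s i a * u th false (others a i) +
  s i * (- gamma + ind R th * (w + gamma * I%:R) * \prod_(j | j != i) s j).
Proof.
rewrite sum_pact_own.
have own_part a : a i ->
    pact_others s i a * (s i * u th true (others a i) + (1 - s i) * u th false (others a i)) =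
    pact_others s i a * u th false (others a i) + s i * (- gamma * pact_others s i a +
      ind R th * (w + gamma * I%:R) * (pact_others s i a * ind R [forall j, a j])).
  move=> ai; rewrite -(subrK (u th false (others a i)) (u th true (others a i))).
  by rewrite classP_gain // ind_andb; ring.
rewrite (eq_bigr _ own_part) big_split /= -mulr_sumr big_split /= -!mulr_sumr.
by rewrite sum_pact_others sum_pact_others_all mulr1.
Qed.
End Profiles.

Section Incentive.
Variables (R : realType) (I : nat) (par : 'I_I -> option 'I_I).
Variables (rho eps w gamma : R) (u : bool -> bool -> nat -> R).
Hypothesis u_classP : inClassP I w gamma u.

Definition act_prob (sig : strategy R I) th l j : R := sig j (received par th l j).

Definition incentive (sig : strategy R I) i x : R :=
  \sum_th \sum_(l : losses I) prior rho th * lossprob eps l * ind R (received par th l i == x) *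
    (- gamma + ind R th * (w + gamma * I%:R) * \prod_(j | j != i) act_prob sig th l j).

Lemma act_prob_deviate sig i tau th l j :
  act_prob (deviate sig i tau) th l j =
  if j == i then tau (received par th l j) else act_prob sig th l j.
Proof. by rewrite /act_prob /deviate; case: (j == i). Qed.

Lemma sum_weight_payoff sig th l i :
  \sum_(a : profile I) weight rho eps par sig th l a * u th (a i) (others a i) =
  prior rho th * lossprob eps l *
  (\sum_(a : profile I | a i) pact_others (act_prob sig th l) i a * u th false (others a i) +
   act_prob sig th l i *
     (- gamma + ind R th * (w + gamma * I%:R) * \prod_(j | j != i) act_prob sig th l j)).
Proof.
rewrite -(sum_pact_payoff u_classP (act_prob sig th l)) mulr_sumr.
by apply: eq_bigr => a _; rewrite /weight -mulrA.
Qed.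

Lemma EU_deviate sig i tau :
  EU rho eps par u (deviate sig i tau) i - EU rho eps par u sig i =
  (tau true - sig i true) * incentive sig i true +
  (tau false - sig i false) * incentive sig i false.
Proof.
rewrite /EU /incentive !mulr_sumr -big_split -sumrB /=; apply: eq_bigr => th _.
rewrite !mulr_sumr -big_split -sumrB /=; apply: eq_bigr => l _.
have same_others j : j != i -> act_prob (deviate sig i tau) th l j = act_prob sig th l j.
  by move=> ji; rewrite act_prob_deviate (negbTE ji).
rewrite !sum_weight_payoff (eq_bigr _ same_others) act_prob_deviate eqxx.
rewrite (eq_bigr _ (fun a _ => congr1 (fun p => p * _) (eq_pact_others a same_others))).
by rewrite /act_prob; case: (received par th l i); rewrite /ind /=; ring.
Qed.

Lemma BNE_incentive_lt0 sig i x :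
  is_BNE rho eps par u sig -> incentive sig i x < 0 -> sig i x = 0.
Proof.
move=> [mixed best] neg_incentive; have /andP[sig0 _] := mixed i x.
pose tau y := if y == x then 0 else sig i y.
have tau_mixed : is_mixed tau.
  by move=> y; rewrite /tau; case: eqP => _; [rewrite lexx ler01 | exact: mixed].
have := best i tau tau_mixed; rewrite -subr_le0 EU_deviate /tau; clear tau_mixed tau.
by case: x neg_incentive sig0; rewrite /= subrr mul0r ?addr0 ?add0r; nra.
Qed.

Lemma pure_BNE sig : (forall j x, sig j x = 0 \/ sig j x = 1) ->
  (forall i x, sig i x = 1 -> 0 <= incentive sig i x) ->
  (forall i x, sig i x = 0 -> incentive sig i x <= 0) ->
  is_BNE rho eps par u sig.
Proof.
move=> pure incentive1 incentive0; split.
  by move=> j x; case: (pure j x) => ->; rewrite ?lexx ?ler01.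
move=> i tau tau_mixed; rewrite -subr_le0 EU_deviate.
suff no_gain x : (tau x - sig i x) * incentive sig i x <= 0.
  by have := no_gain true; have := no_gain false; lra.
case/andP: (tau_mixed x) => tau0 tau1; case: (pure i x) => sig_x.
  by have := incentive0 _ _ sig_x; rewrite sig_x; nra.
by have := incentive1 _ _ sig_x; rewrite sig_x; nra.
Qed.

End Incentive.

Section LossSums.
Variables (R : realType) (I : nat) (eps : R).

Lemma sum_lossprob_prod (H : 'I_I -> bool -> R) :
  \sum_(l : losses I) lossprob eps l * \prod_j H j (l j) =
  \prod_j (eps * H j true + (1 - eps) * H j false).
Proof.
rewrite -(sum_ffun_prod (fun j b => (if b then eps else 1 - eps) * H j b)).
by apply: eq_bigr => l _; rewrite /lossprob -big_split.
Qed.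

Lemma sum_lossprob : \sum_(l : losses I) lossprob eps l = 1.
Proof.
rewrite (eq_bigr (fun l => lossprob eps l * \prod_(j < I) 1)) => [|l _]; last by rewrite big1 ?mulr1.
by rewrite (sum_lossprob_prod (fun _ _ => 1)) big1 // => j _; rewrite !mulr1 subrKC.
Qed.

Lemma sum_lossprob_lost i : \sum_(l : losses I) lossprob eps l * ind R (l i) = eps.
Proof.
pose H j b := if j == i then ind R b else 1.
rewrite (eq_bigr (fun l => lossprob eps l * \prod_j H j (l j))) => [|l _]; last first.
  by rewrite (bigD1 i) //= /H eqxx big1 ?mulr1 // => j /negbTE ->.
rewrite sum_lossprob_prod (bigD1 i) //= /H eqxx big1 => [|j /negbTE ->]; last first.
  by rewrite !mulr1 subrKC.
by rewrite /ind /=; ring.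
Qed.

Lemma sum_lossprob_kept i : \sum_(l : losses I) lossprob eps l * ind R (~~ l i) = 1 - eps.
Proof.
rewrite -[X in _ = X - _]sum_lossprob -[X in _ = _ - X](sum_lossprob_lost i) -sumrB.
apply: eq_bigr => l _.
by case: (l i); rewrite /ind /=; ring.
Qed.

Lemma sum_lossprob_none :
  \sum_(l : losses I) lossprob eps l * ind R [forall j, ~~ l j] = (1 - eps) ^+ I.
Proof.
under eq_bigr do rewrite -prod_ind.
rewrite (sum_lossprob_prod (fun _ b => ind R (~~ b))) (eq_bigr (fun _ => 1 - eps)) ?prodr_const ?card_ord // => j _.
by rewrite /ind /=; ring.
Qed.

Lemma lossprob_ge0 (l : losses I) : 0 <= eps <= 1 -> 0 <= lossprob eps l.
Proof. by case/andP=> eps0 eps1; apply: prodr_ge0 => j _; case: (l j); lra. Qed.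

End LossSums.

(* [iter n up (Some i) = None] says that i has depth less than n in the forest. *)
Section Forest.
Variables (I : nat) (par : 'I_I -> option 'I_I).
Local Notation up := (fun o => obind par o).

Lemma iter_up_None n : iter n up None = None.
Proof. by elim: n => //= n ->. Qed.

Lemma anc_refl i : anc par i i.
Proof. by apply/existsP; exists (Ordinal (leq_ltn_trans (leq0n _) (ltn_ord i))). Qed.

Lemma anc_seed s j : par s = None -> anc par s j -> j = s.
Proof.
move=> seed /existsP[[k _] /eqP] /=; case: k => [[->] //|k].
by rewrite iterSr /= seed iter_up_None.
Qed.

Lemma exists_seed n i : iter n up (Some i) = None -> exists s, par s = None.
Proof.
elim: n i => [|n IHn] i //; rewrite iterSr /=.
by case seed: (par i) => [j|]; [exact: IHn | exists i].
Qed.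

Lemma anc_depth n i j : iter n.+1 up (Some i) = None -> anc par i j -> j != i ->
  iter n up (Some j) = None.
Proof.
move=> depth_i /existsP[[k _] /eqP /= ij] ji.
case: k ij => [[ji_eq]|k ij]; first by rewrite ji_eq eqxx in ji.
by rewrite -ij -iterD -addSnnS addnC iterD depth_i iter_up_None.
Qed.

Lemma received_anc th l i j : received par th l i -> anc par i j -> ~~ l j.
Proof. by move=> /andP[_ /forallP kept] ij; move: (kept j); rewrite ij. Qed.

Lemma received_kept th l i : received par th l i -> ~~ l i.
Proof. by move/received_anc; apply; apply: anc_refl. Qed.

Lemma received_lost th (l : losses I) j : l j -> received par th l j = false.
Proof. by move=> lost; apply/negbTE/negP => /received_kept; rewrite lost. Qed.

Lemma not_received_lost l i : ~~ received par true l i ->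
  (forall j, anc par i j -> j != i -> ~~ l j) -> l i.
Proof.
move=> not_rec kept_above; apply/negPn/negP => kept_i; move/negP: not_rec; apply.
apply/forallP => j; apply/implyP => ij.
by case: (eqVneq j i) => [->|ji] //; apply: kept_above.
Qed.

Lemma received_none_lost (l : losses I) i : [forall j, ~~ l j] -> received par true l i.
Proof. by move=> /forallP kept; apply/forallP => j; rewrite kept implybT. Qed.

Lemma received_seed s l : par s = None -> received par true l s = ~~ l s.
Proof.
move=> seed; apply/idP/idP; first exact: received_kept.
by move=> kept; apply/forallP => j; apply/implyP => /(anc_seed seed) ->.
Qed.

End Forest.

Section Observations.
Variables (R : realType) (I : nat) (par : 'I_I -> option 'I_I) (rho eps : R).

Definition obs_good i x : R :=
  \sum_(l : losses I) lossprob eps l * ind R (received par true l i == x).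

Definition prob_coord (sig : strategy R I) i x : R :=
  \sum_(l : losses I) lossprob eps l * ind R (received par true l i == x) *
    \prod_(j | j != i) act_prob par sig true l j.

Definition mixed_strategy (sig : strategy R I) := forall j, is_mixed (sig j).

Lemma incentiveE w gamma sig i x :
  incentive par rho eps w gamma sig i x =
  - gamma * ((1 - rho) * ind R (~~ x) + rho * obs_good i x) +
  (w + gamma * I%:R) * rho * prob_coord sig i x.
Proof.
rewrite /incentive big_bool /= [in RHS]mulrDr -[in RHS]addrA [in RHS]addrC; congr (_ + _).
  rewrite /obs_good /prob_coord !mulr_sumr -big_split; apply: eq_bigr => l _.
  by rewrite /ind /=; ring.
rewrite -[RHS]mulr1 -(@sum_lossprob R I eps) !mulr_sumr; apply: eq_bigr => l _.
by case: x; rewrite /ind /=; ring.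
Qed.

Lemma prob_all1E sig : prob_all1 rho eps par sig =
  rho * \sum_(l : losses I) lossprob eps l * \prod_j act_prob par sig true l j +
  (1 - rho) * \prod_j sig j false.
Proof.
have all1 th l : \sum_(a : profile I) weight rho eps par sig th l a * ind R [forall j, a j] =
    prior rho th * lossprob eps l * \prod_j act_prob par sig th l j.
  rewrite (sum_mul_ind_all (P := xpredT)) //.
  by congr (_ * _); apply: eq_bigr => j _; rewrite ffunE.
rewrite /prob_all1 big_bool /= (eq_bigr _ (fun l _ => all1 true l)) (eq_bigr _ (fun l _ => all1 false l)).
congr (_ + _); first by rewrite mulr_sumr; apply: eq_bigr => l _; rewrite mulrA.
rewrite (eq_bigr (fun l => lossprob eps l * ((1 - rho) * \prod_j sig j false))) => [|l _].
  by rewrite -mulr_suml sum_lossprob mul1r.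
by rewrite /act_prob /=; ring.
Qed.

Hypothesis eps01 : 0 <= eps <= 1.

Lemma obs_good_ge0 i x : 0 <= obs_good i x.
Proof. by apply: sumr_ge0 => l _; rewrite mulr_ge0 ?lossprob_ge0 ?ind_ge0. Qed.

Lemma obs_good_true_le i : obs_good i true <= 1 - eps.
Proof.
rewrite -(sum_lossprob_kept eps i); apply: ler_sum => l _.
apply: (ler_wpM2l (lossprob_ge0 l eps01)).
case rec: (received par true l i); last by rewrite /ind /=; case: (~~ l i); rewrite ?lexx ?ler01.
by rewrite (received_kept rec).
Qed.

Lemma obs_good_seed s : par s = None -> obs_good s true = 1 - eps.
Proof.
move=> seed; rewrite -(sum_lossprob_kept eps s).
by apply: eq_bigr => l _; rewrite received_seed // eqb_id.
Qed.

Lemma obs_good_false_ge i : eps <= obs_good i false.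
Proof.
rewrite -(sum_lossprob_lost eps i); apply: ler_sum => l _.
apply: (ler_wpM2l (lossprob_ge0 l eps01)).
case lost: (l i); last by rewrite /ind; case: (_ == _); rewrite ?lexx ?ler01.
by rewrite received_lost.
Qed.

Lemma prob_coord_false_le sig i : mixed_strategy sig ->
  (forall j, anc par i j -> j != i -> sig j false = 0) -> prob_coord sig i false <= eps.
Proof.
move=> mixed above0; rewrite /prob_coord -[X in _ <= X](sum_lossprob_lost eps i); apply: ler_sum => l _.
rewrite -mulrA; apply: (ler_wpM2l (lossprob_ge0 l eps01)).
have /andP[prod0 prod1] : 0 <= \prod_(j | j != i) act_prob par sig true l j <= 1.
  by apply: prod_in01 => j; apply: mixed.
case rec: (received par true l i); rewrite /ind /=.
  by rewrite mul0r; case: (l i); rewrite ?lexx ?ler01.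
case lost: (l i); first by rewrite mul1r.
case: (boolP [exists j, [&& anc par i j, j != i & l j]]) => [|/existsPn kept_above].
  case/existsP=> j /and3P[ij ji lj].
  by rewrite (prod_eq0 (j := j)) ?mulr0 // /act_prob received_lost // above0.
move: lost; rewrite (not_received_lost (negbT rec)) // => j ij ji.
by move: (kept_above j); rewrite ij ji.
Qed.

Lemma prob_coord_true_le sig i : mixed_strategy sig -> (forall j, sig j false = 0) ->
  prob_coord sig i true <= (1 - eps) ^+ I.
Proof.
move=> mixed ignore_n; rewrite /prob_coord -(@sum_lossprob_none R I eps); apply: ler_sum => l _.
rewrite -mulrA; apply: (ler_wpM2l (lossprob_ge0 l eps01)).
have /andP[prod0 prod1] : 0 <= \prod_(j | j != i) act_prob par sig true l j <= 1.
  by apply: prod_in01 => j; apply: mixed.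
case: (boolP [forall j, ~~ l j]) => [_|/forallPn[j /negPn lj]].
  by rewrite /ind; case: (_ == _); rewrite ?mul1r ?mul0r ?ler01.
case: (eqVneq j i) => [<-|ji]; first by rewrite received_lost //= /ind mul0r lexx.
by rewrite (prod_eq0 (j := j)) ?mulr0 ?ind_ge0 // /act_prob received_lost.
Qed.

Lemma prod_act_prob_le sig l : mixed_strategy sig -> (forall j, sig j false = 0) ->
  \prod_j act_prob par sig true l j <= ind R [forall j, ~~ l j].
Proof.
move=> mixed ignore_n.
have /andP[prod0 prod1] : 0 <= \prod_j act_prob par sig true l j <= 1.
  by apply: prod_in01 => j; apply: mixed.
case: (boolP [forall j, ~~ l j]) => [//|/forallPn[j /negPn lj]].
by rewrite (prod_eq0 (j := j)) ?ind_ge0 // /act_prob received_lost.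
Qed.

End Observations.

Section Equilibria.
Variables (R : realType) (I : nat) (par : 'I_I -> option 'I_I).
Variables (rho eps w gamma : R) (u : bool -> bool -> nat -> R).
Hypothesis u_classP : inClassP I w gamma u.
Hypothesis rho01 : 0 < rho < 1.
Hypothesis eps01 : 0 < eps < 1.
Hypothesis gamma_gt0 : 0 < gamma.
Hypothesis w_gt : - (I.-1%:R * gamma) < w.
Hypothesis I_ge2 : (2 <= I)%N.

Local Notation K := (w + gamma * I%:R).
Local Notation BNE := (is_BNE rho eps par u).
Local Notation incentive := (incentive par rho eps w gamma).
Local Notation prob_all1 := (prob_all1 rho eps par).

Let eps_in01 : 0 <= eps <= 1.
Proof. by case/andP: eps01 => *; apply/andP; split; apply: ltW. Qed.

Let rho_gt0 : 0 < rho. Proof. by case/andP: rho01. Qed.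
Let rho_ge0 : 0 <= rho. Proof. exact: ltW. Qed.
Let rho_compl_ge0 : 0 <= 1 - rho. Proof. by case/andP: rho01 => _ /ltW; rewrite subr_ge0. Qed.
Let eps_compl_gt0 : 0 < 1 - eps. Proof. by case/andP: eps01 => _; rewrite subr_gt0. Qed.

Let agent0 : 'I_I := Ordinal (leq_trans (isT : 0 < 2)%N I_ge2).

Lemma exists_other_agent i : exists j : 'I_I, j != i.
Proof.
case: (eqVneq i agent0) => [->|i0]; last by exists agent0; rewrite eq_sym.
by exists (Ordinal I_ge2).
Qed.

Definition follow_signal : strategy R I := fun _ x => ind R x.

Let exprI : (1 - eps) ^+ I = (1 - eps) * (1 - eps) ^+ I.-1.
Proof. by rewrite -exprS prednK // (leq_trans _ I_ge2). Qed.

Lemma gamma_lt_K : gamma < K.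
Proof.
have -> : I%:R = I.-1%:R + 1 :> R by rewrite natr1 prednK // (leq_trans _ I_ge2).
rewrite mulrDr mulr1 mulrC; have := w_gt.
(* lra only sees the nonlinear product as an atom once it is named *)
by move: (I.-1%:R * gamma) => x; lra.
Qed.

Lemma K_gt0 : 0 < K.
Proof. exact: lt_trans gamma_gt0 gamma_lt_K. Qed.

Let K_rho_ge0 : 0 <= K * rho.
Proof. exact: mulr_ge0 (ltW K_gt0) rho_ge0. Qed.

Lemma le_q1E : (gamma / K <= q1 rho eps) = (gamma * (1 - rho * (1 - eps)) <= rho * eps * K).
Proof.
have den_gt0 : 0 < 1 - rho * (1 - eps) by case/andP: rho01; case/andP: eps01 => *; nra.
by rewrite /q1 ler_pdivrMr ?K_gt0 // mulrAC ler_pdivlMr.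
Qed.

Lemma le_q2E : (gamma / K <= q2 I eps) = (gamma <= (1 - eps) ^+ I.-1 * K).
Proof. by rewrite /q2 ler_pdivrMr // K_gt0. Qed.

Lemma incentive_false_le sig i : mixed_strategy sig ->
  (forall j, anc par i j -> j != i -> sig j false = 0) ->
  incentive sig i false <= rho * eps * K - gamma * (1 - rho * (1 - eps)).
Proof.
move=> mixed above0; rewrite incentiveE /ind /= mulr1.
set B := obs_good par eps i false; set G := prob_coord par eps sig i false.
have -> : - gamma * (1 - rho + rho * B) + K * rho * G =
    rho * eps * K - gamma * (1 - rho * (1 - eps)) +
    (K * rho * (G - eps) - gamma * rho * (B - eps)) by ring.
rewrite gerDl subr_le0 (@le_trans _ _ 0) //.
  by rewrite mulr_ge0_le0 // subr_le0 (prob_coord_false_le eps_in01).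
by rewrite mulr_ge0 ?(mulr_ge0 (ltW gamma_gt0)) // subr_ge0 (obs_good_false_ge par eps_in01).
Qed.

Let coord_gain_split :
  rho * (1 - eps) * ((1 - eps) ^+ I.-1 * K - gamma) =
  - gamma * (rho * (1 - eps)) + K * rho * (1 - eps) ^+ I.
Proof. by rewrite exprI; ring. Qed.

Lemma incentive_seed_true_le sig s : mixed_strategy sig -> (forall j, sig j false = 0) ->
  par s = None -> incentive sig s true <= rho * (1 - eps) * ((1 - eps) ^+ I.-1 * K - gamma).
Proof.
move=> mixed ignore_n seed; rewrite incentiveE obs_good_seed // /ind /= mulr0 add0r.
by rewrite coord_gain_split lerD2l ler_wpM2l ?prob_coord_true_le.
Qed.

Lemma incentive_follow_true_ge i :
  rho * (1 - eps) * ((1 - eps) ^+ I.-1 * K - gamma) <= incentive follow_signal i true.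
Proof.
rewrite incentiveE /ind /= mulr0 add0r coord_gain_split; apply: lerD.
  by rewrite !mulNr lerN2 ler_wpM2l ?(ltW gamma_gt0) ?ler_wpM2l ?obs_good_true_le.
apply: ler_wpM2l => //; rewrite -(@sum_lossprob_none R I eps); apply: ler_sum => l _.
rewrite -mulrA; apply: (ler_wpM2l (lossprob_ge0 l eps_in01)).
case: (boolP [forall j, ~~ l j]) => [kept|_].
  rewrite received_none_lost // big1 ?mulr1 // => j _.
  by rewrite /act_prob received_none_lost.
by rewrite mulr_ge0 ?ind_ge0 // prodr_ge0 // => j _; apply: ind_ge0.
Qed.

Lemma always1_BNE : gamma / K <= q1 rho eps -> BNE (fun _ _ => 1).
Proof.
rewrite le_q1E => q1_le.
apply: (pure_BNE u_classP) => [j x|i x _|i x /eqP]; [by right | | by rewrite oner_eq0].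
have coord_obs : prob_coord par eps (fun _ _ => 1) i x = obs_good par eps i x.
  by apply: eq_bigr => l _; rewrite big1 ?mulr1.
have K_gamma : 0 <= K - gamma by rewrite subr_ge0 ltW ?gamma_lt_K.
have obs0 := obs_good_ge0 par eps_in01 i x.
rewrite incentiveE coord_obs; clear coord_obs; case: x obs0 => obs0; rewrite /ind /= ?mulr0 ?mulr1 ?add0r.
  have -> : - gamma * (rho * obs_good par eps i true) + K * rho * obs_good par eps i true =
      (K - gamma) * rho * obs_good par eps i true by ring.
  by rewrite !mulr_ge0.
set B := obs_good par eps i false.
have -> : - gamma * (1 - rho + rho * B) + K * rho * B =
    rho * eps * K - gamma * (1 - rho * (1 - eps)) + (K - gamma) * rho * (B - eps) by ring.
by rewrite addr_ge0 ?subr_ge0 // !mulr_ge0 // subr_ge0 (obs_good_false_ge par eps_in01).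
Qed.

Lemma prob_all1_always1 : prob_all1 (fun _ _ => 1) = 1.
Proof.
rewrite prob_all1E (eq_bigr (lossprob eps)) => [|l _]; last by rewrite big1 ?mulr1.
by rewrite sum_lossprob big1 // !mulr1 subrKC.
Qed.

Lemma follow_BNE : ~~ (gamma / K <= q1 rho eps) -> gamma / K <= q2 I eps ->
  BNE follow_signal.
Proof.
rewrite le_q1E le_q2E -ltNge => q1_lt q2_le.
have mixed : mixed_strategy follow_signal by move=> j x; rewrite ind_ge0 ind_le1.
apply: (pure_BNE u_classP) => [j x|i x|i x]; first by case: x; [right | left].
  case: x => [_|/eqP]; last by rewrite eq_sym oner_eq0.
  apply: le_trans (incentive_follow_true_ge i).
  by rewrite mulr_ge0 ?(mulr_ge0 rho_ge0 (ltW eps_compl_gt0)) // subr_ge0.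
case: x => [/eqP|_]; first by rewrite oner_eq0.
apply: le_trans (incentive_false_le mixed _) _ => //.
by rewrite subr_le0 ltW.
Qed.

Lemma prob_all1_follow : prob_all1 follow_signal = rho * (1 - eps) ^+ I.
Proof.
rewrite prob_all1E (prod_eq0 (j := agent0)) // mulr0 addr0; congr (_ * _).
rewrite -(@sum_lossprob_none R I eps); apply: eq_bigr => l _; congr (_ * _).
rewrite /act_prob prod_ind; congr (ind R _).
apply/forallP/forallP => [received_all j | kept j]; first exact: received_kept (received_all j).
by apply: received_none_lost; apply/forallP.
Qed.

Lemma always0_BNE : BNE (fun _ _ => 0).
Proof.
apply: (pure_BNE u_classP) => [j x|i x /eqP|i x _]; [by left | by rewrite eq_sym oner_eq0 |].
have [j ji] := exists_other_agent i.
rewrite incentiveE; have -> : prob_coord par eps (fun _ _ => 0) i x = 0.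
  by apply: big1 => l _; rewrite (prod_eq0 (j := j)) ?mulr0.
rewrite mulr0 addr0 mulNr oppr_le0 (mulr_ge0 (ltW gamma_gt0)) //.
by rewrite addr_ge0 ?mulr_ge0 ?ind_ge0 ?obs_good_ge0.
Qed.

Lemma prob_all1_always0 : prob_all1 (fun _ _ => 0) = 0.
Proof.
rewrite prob_all1E big1 => [|l _]; last by rewrite (prod_eq0 (j := agent0)) ?mulr0.
by rewrite (prod_eq0 (j := agent0)) // !mulr0 addr0.
Qed.

Lemma prob_all1_le1 sig : mixed_strategy sig -> prob_all1 sig <= 1.
Proof.
move=> mixed.
have prod_le1 (F : 'I_I -> R) : (forall j, 0 <= F j <= 1) -> \prod_j F j <= 1.
  by move=> F01; case/andP: (prod_in01 predT F01).
have coord_le1 : \sum_(l : losses I) lossprob eps l * \prod_j act_prob par sig true l j <= 1.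
  rewrite -[X in _ <= X](@sum_lossprob R I eps); apply: ler_sum => l _.
  rewrite -[X in _ <= X]mulr1; apply: (ler_wpM2l (lossprob_ge0 l eps_in01)).
  by apply: prod_le1 => j; apply: mixed.
rewrite prob_all1E -[X in _ <= X](subrKC rho).
by rewrite lerD // -[X in _ <= X]mulr1 ler_wpM2l // prod_le1 // => j; apply: mixed.
Qed.

Lemma BNE_ignore_n sig : info_tree par -> ~~ (gamma / K <= q1 rho eps) -> BNE sig ->
  forall j, sig j false = 0.
Proof.
rewrite le_q1E -ltNge => tree q1_lt eq; have [mixed _] := eq.
suff depth n i : iter n (fun o => obind par o) (Some i) = None -> sig i false = 0.
  by move=> j; apply: depth (tree j).
elim: n i => [|n IHn] i // depth_i; apply: (BNE_incentive_lt0 u_classP eq).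
apply: le_lt_trans (incentive_false_le mixed _) _; last by rewrite subr_lt0.
by move=> j ij ji; apply: IHn; apply: anc_depth depth_i ij ji.
Qed.

Lemma prob_all1_le_kept sig : mixed_strategy sig -> (forall j, sig j false = 0) ->
  prob_all1 sig <= rho * (1 - eps) ^+ I.
Proof.
move=> mixed ignore_n; rewrite prob_all1E (prod_eq0 (j := agent0)) // mulr0 addr0.
apply: ler_wpM2l => //; rewrite -(@sum_lossprob_none R I eps); apply: ler_sum => l _.
by apply: (ler_wpM2l (lossprob_ge0 l eps_in01)); apply: prod_act_prob_le.
Qed.

Lemma prob_all1_eq0 sig : info_tree par -> ~~ (gamma / K <= q2 I eps) -> BNE sig ->
  (forall j, sig j false = 0) -> prob_all1 sig = 0.
Proof.
rewrite le_q2E -ltNge => tree q2_lt eq ignore_n; have [mixed _] := eq.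
have [s seed] := exists_seed (tree agent0).
have sig_s : sig s true = 0.
  apply: (BNE_incentive_lt0 u_classP eq); apply: le_lt_trans (incentive_seed_true_le mixed ignore_n seed) _.
  by rewrite pmulr_rlt0 ?subr_lt0 ?mulr_gt0.
rewrite prob_all1E (prod_eq0 (j := agent0)) // mulr0 addr0 big1 ?mulr0 // => l _.
by rewrite (prod_eq0 (j := s)) ?mulr0 // /act_prob; case: (received par true l s).
Qed.

End Equilibria.

Theorem mainTheorem8 (R : realType) (I : nat) (rho eps w gamma : R)
  (u : bool -> bool -> nat -> R) (par : 'I_I -> option 'I_I) :
  (2 <= I)%N -> 0 < rho < 1 -> 0 < eps < 1 ->
  inClassP I w gamma u -> 0 < gamma -> - (I.-1%:R * gamma) < w ->
  (* eps < epsbar, epsbar the unique point of (0,1) with q1 = q2 *)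
  (exists epsbar : R, 0 < epsbar < 1 /\ q1 rho epsbar = q2 I epsbar /\
                      eps < epsbar) ->
  info_tree par ->
  let p := gamma / (w + gamma * I%:R) in
  let val := if p <= q1 rho eps then 1
             else if p <= q2 I eps then rho * (1 - eps) ^+ I else 0 in
  (exists sigma : strategy R I,
      is_BNE rho eps par u sigma /\ prob_all1 rho eps par sigma = val) /\
  (forall sigma : strategy R I,
      is_BNE rho eps par u sigma -> prob_all1 rho eps par sigma <= val).
Proof.
(* The hypothesis eps < epsbar only makes q1 < q2; the nested case split does not need it. *)
move=> I_ge2 rho01 eps01 u_classP gamma_gt0 w_gt _ tree p val; rewrite /val /p.
have eps_in01 : 0 <= eps <= 1 by case/andP: eps01 => *; rewrite !ltW.
case: ifP => [q1_le | /negbT q1_gt].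
  split; first by exists (fun _ _ => 1); split; [apply: always1_BNE | apply: prob_all1_always1].
  by move=> sig [mixed _]; apply: prob_all1_le1.
have ignore_n sig : is_BNE rho eps par u sig -> forall j, sig j false = 0.
  by move=> eq; apply: BNE_ignore_n eq.
case: ifP => [q2_le | /negbT q2_gt].
  split; first by exists (@follow_signal R I); split; [apply: follow_BNE | apply: prob_all1_follow].
  by move=> sig eq; apply: prob_all1_le_kept (ignore_n _ eq); case: eq.
split; first by exists (fun _ _ => 0); split; [apply: always0_BNE | apply: prob_all1_always0].
by move=> sig eq; rewrite (prob_all1_eq0 u_classP _ _ _ _ _ tree q2_gt eq (ignore_n _ eq)).
Qed.
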